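(* Let $\mathcal E$ be a nest on a complex Banach space $X$ and let $\mathcal J$ be a $\mathcal T(\mathcal E)$-bimodule. Then $(\Phi_{\mathcal J},\Phi^e_{\mathcal J})$ is an admissible support function pair on $\mathcal E$.
   Context: A nest $\mathcal E$ on $X$ is a family of closed linear subspaces of $X$, totally ordered by inclusion, containing $\{0\}$ and $X$, closed under arbitrary meets $\wedge$ (intersections) and joins $\vee$ (norm-closed linear spans of unions). For $E\in\mathcal E$, $E_-=\vee\{F\in\mathcal E: F\subsetneq E\}$ and $E_+=\wedge\{F\in\mathcal E: E\subsetneq F\}$. $\mathcal T(\mathcal E)=\{T\in\mathcal B(X): TE\subseteq E\ \forall E\in\mathcal E\}$; a $\mathcal T(\mathcal E)$-bimodule is a linear subspace $\mathcal J\subseteq\mathcal B(X)$ with $\mathcal T(\mathcal E)\mathcal J,\mathcal J\mathcal T(\mathcal E)\subseteq\mathcal J$. For subspaces $M,L$ ($L$ closed), $M/L=\{m+L:m\in M\}$ and $\dim(M/L)$ is its dimension. A support function is an inclusion-preserving map $\mathcal E\to\mathcal E$; it is admissible if for all $N\neq\{0\}$, $\vee_{E\subsetneq N}\Phi(E)=\Phi(N_-)$. $\Phi\le\Theta$ means $\Phi(E)\subseteq\Theta(E)$ for all $E$. $\mathcal E_f=\{N\in\mathcal E: 0<\dim(N/N_-)<\infty\}$. An essential support function is a support function $\Psi$ such that for all $N,N_1,N_2\in\mathcal E$ with $N_1\subseteq N_2$: (a) $\Psi(N)\in\mathcal E_f\Rightarrow\Psi(N)=\Psi(N)_+$; (b)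 $\dim(N_2/N_1)<\infty\Rightarrow\Psi(N_2)=\Psi(N_1)$. A support function pair is a pair $(\Phi,\Psi)$ with $\Phi$ admissible, $\Phi(\{0\})=\{0\}$, $\Psi$ an essential support function and $\Psi\le\Phi$; it is admissible if moreover $\Psi(N)\in\mathcal E_f\Rightarrow\Psi(N)\subsetneq\Phi(N)$ for all $N\in\mathcal E$. For a bimodule $\mathcal J$: $\Phi_{\mathcal J}(E)=[\mathcal JE]$ (norm-closed linear span of $\{Tx:T\in\mathcal J,x\in E\}$), and $\Phi^e_{\mathcal J}(N)=\wedge\{L\in\mathcal E: \dim(TN/L)<\infty\ \forall T\in\mathcal J\}$. *)

(* Complex scalars: C := R[i] for R : realType
   (mathcomp-real-closed's complex numbers), a complex Banach space is a
   completeNormedModType R[i]. *)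
From mathcomp Require Import all_boot all_algebra.
From mathcomp Require Import all_classical all_reals all_analysis.
From mathcomp Require Import complex.

Set Implicit Arguments.
Unset Strict Implicit.
Unset Printing Implicit Defensive.

Import GRing.Theory Num.Theory.
Local Open Scope classical_set_scope.
Local Open Scope ring_scope.

Section NestDefs.
Context {R : realType} {V : normedModType R[i]}.

Definition lin_subspace (M : set V) : Prop :=
  M 0 /\ forall (a : R[i]) (x y : V), M x -> M y -> M (a *: x + y).

Definition closed_subspace (M : set V) : Prop := lin_subspace M /\ closed M.

Definition cspan (S : set V) : set V :=
  \bigcap_(M in [set M | closed_subspace M /\ S `<=` M]) M.

Definition smeet (F : set (set V)) : set V := \bigcap_(M in F) M.
Definition sjoin (F : set (set V)) : set V := cspan (\bigcup_(M in F) M).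

Definition is_nest (E : set (set V)) : Prop :=
  [/\ (forall M, E M -> closed_subspace M),
      (forall M N, E M -> E N -> M `<=` N \/ N `<=` M),
      E [set (0 : V)], E setT &
      forall F, F `<=` E -> E (smeet F) /\ E (sjoin F)].

Definition nest_minus (E : set (set V)) (N : set V) : set V :=
  sjoin [set F | E F /\ F `<=` N /\ F <> N].
Definition nest_plus (E : set (set V)) (N : set V) : set V :=
  smeet [set F | E F /\ N `<=` F /\ N <> F].

Definition bounded_op (T : V -> V) : Prop :=
  (forall (a : R[i]) (x y : V), T (a *: x + y) = a *: T x + T y) /\
  continuous T.

Definition nest_alg (E : set (set V)) (T : V -> V) : Prop :=
  bounded_op T /\ forall M, E M -> T @` M `<=` M.

Definition bimodule (E : set (set V)) (J : set (V -> V)) : Prop :=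
  [/\ J `<=` bounded_op,
      J (fun _ => 0),
      (forall (a : R[i]) S T, J S -> J T -> J (fun x => a *: S x + T x)) &
      forall A S, nest_alg E A -> J S -> J (A \o S) /\ J (S \o A)].

(* dim (M / L) < oo : M / L = {m + L} is spanned by finitely many cosets *)
Definition quot_fin_dim (M L : set V) : Prop :=
  exists (n : nat) (v : 'I_n -> V), (forall i, M (v i)) /\
    forall x, M x -> exists c : 'I_n -> R[i], L (x - \sum_(i < n) c i *: v i).

(* 0 < dim (M / L) : M / L is not the zero space *)
Definition quot_dim_pos (M L : set V) : Prop := exists x, M x /\ ~ L x.

Definition nest_f (E : set (set V)) (N : set V) : Prop :=
  [/\ E N, quot_dim_pos N (nest_minus E N) & quot_fin_dim N (nest_minus E N)].

Definition support_fun (E : set (set V)) (Phi : set V -> set V) : Prop :=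
  (forall N, E N -> E (Phi N)) /\
  (forall N1 N2, E N1 -> E N2 -> N1 `<=` N2 -> Phi N1 `<=` Phi N2).

Definition admissible_sf (E : set (set V)) (Phi : set V -> set V) : Prop :=
  support_fun E Phi /\
  forall N, E N -> N <> [set (0 : V)] ->
    sjoin (Phi @` [set F | E F /\ F `<=` N /\ F <> N]) = Phi (nest_minus E N).

Definition essential_sf (E : set (set V)) (Psi : set V -> set V) : Prop :=
  [/\ support_fun E Psi,
      (forall N, E N -> nest_f E (Psi N) -> Psi N = nest_plus E (Psi N)) &
      (forall N1 N2, E N1 -> E N2 -> N1 `<=` N2 -> quot_fin_dim N2 N1 ->
         Psi N2 = Psi N1)].

Definition sf_le (E : set (set V)) (Phi Theta : set V -> set V) : Prop :=
  forall N, E N -> Phi N `<=` Theta N.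

Definition sf_pair (E : set (set V)) (Phi Psi : set V -> set V) : Prop :=
  [/\ admissible_sf E Phi, Phi [set (0 : V)] = [set (0 : V)],
      essential_sf E Psi & sf_le E Psi Phi].

Definition admissible_sf_pair (E : set (set V)) (Phi Psi : set V -> set V)
  : Prop :=
  sf_pair E Phi Psi /\
  forall N, E N -> nest_f E (Psi N) -> Psi N `<=` Phi N /\ Psi N <> Phi N.

Definition Phi_J (J : set (V -> V)) (M : set V) : set V :=
  cspan [set y | exists T x, [/\ J T, M x & y = T x]].

Definition Phie_J (E : set (set V)) (J : set (V -> V)) (N : set V) : set V :=
  smeet [set L | E L /\ forall T, J T -> quot_fin_dim (T @` N) L].

End NestDefs.

From mathcomp Require Import all_boot all_algebra.
From mathcomp Require Import all_classical all_reals all_analysis.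
From mathcomp Require Import complex.
From mathcomp Require Import order ring lra.

Set Implicit Arguments.
Unset Strict Implicit.
Unset Printing Implicit Defensive.
Import Order.TTheory GRing.Theory Num.Theory.
Local Open Scope classical_set_scope.
Local Open Scope ring_scope.

(* The one analytic point is that Phi_J (N) = [J N] belongs to E.  Since J is
   a left T(E)-module, [J N] is a closed subspace invariant under the nest
   algebra T(E), and nests are reflexive: every such subspace is in E.
   Reflexivity is proved with rank-one operators z |-> g z *: y in T(E),
   where g is a bounded functional vanishing on a nest element; g is obtained
   from the Hahn-Banach theorem, proved below from Zorn's lemma (real form,
   then complexification).  Admissibility of Phi_J and Phi_J {0} = {0} are
   then formal properties of closed spans.

   The statements about Phi^e_J are algebraic.  "dim (M / L) < oo" is
   handled through the recursive predicate [span_mod L s] (M is covered by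
   span(s) + L), which composes under images, concatenation and enlargement.
   The key point for admissibility of the pair is that when Phi^e_J (N) is in
   E_f, the meet defining it is not attained: (Phi^e_J N)_- would belong to
   the same family. *)

Section SpanModulo.
Variables (R : realType) (X : normedModType R[i]).
Implicit Types (M L : set X) (s t : seq X).

Lemma lin_sub0 M : lin_subspace M -> M 0.
Proof. by case. Qed.

Lemma lin_subC M a x y : lin_subspace M -> M x -> M y -> M (a *: x + y).
Proof. by case=> _; apply. Qed.

Lemma lin_subD M x y : lin_subspace M -> M x -> M y -> M (x + y).
Proof. by move=> HM Mx My; have := lin_subC 1 HM Mx My; rewrite scale1r. Qed.

Lemma lin_subZ M a x : lin_subspace M -> M x -> M (a *: x).
Proof. by move=> HM Mx; have := lin_subC a HM Mx (lin_sub0 HM); rewrite addr0. Qed.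

Lemma lin_subN M x : lin_subspace M -> M x -> M (- x).
Proof. by move=> HM Mx; have := lin_subZ (-1) HM Mx; rewrite scaleN1r. Qed.

Lemma lin_subB M x y : lin_subspace M -> M x -> M y -> M (x - y).
Proof. by move=> HM Mx My; apply: lin_subD => //; exact: lin_subN. Qed.

(* [span_mod L s x] : x lies in span(s) + L.  This recursive form of
   "dim (M / L) < oo" is easy to compose: it is monotone in L, transitive
   along concatenation of lists and transported by linear maps. *)
Fixpoint span_mod L s x : Prop :=
  if s is v :: s' then exists a : R[i], span_mod L s' (x - a *: v) else L x.

Lemma span_mod_subspace L s : lin_subspace L -> lin_subspace (span_mod L s).
Proof.
move=> HL; elim: s => [|v s IH] //=; split.
  by exists 0; rewrite scale0r subr0; exact: lin_sub0.
move=> a x y [b Hb] [b' Hb']; exists (a * b + b').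
have -> : a *: x + y - (a * b + b') *: v = a *: (x - b *: v) + (y - b' *: v).
  rewrite scalerDl -scalerA scalerBr opprD !addrA; congr (_ + _).
  by rewrite addrAC.
exact: lin_subC.
Qed.

Lemma span_mod_cat A B s t x : (forall y, A y -> span_mod B t y) ->
  span_mod A s x -> span_mod B (s ++ t) x.
Proof.
by move=> AB; elim: s x => [|v s IH] x /=; [exact: AB | case=> a /IH; exists a].
Qed.

Lemma span_mod_image (T : X -> X) L s x :
  (forall (a : R[i]) x y, T (a *: x + y) = a *: T x + T y) ->
  span_mod L s x -> span_mod (T @` L) (map T s) (T x).
Proof.
move=> linT; elim: s x => [|v s IH] x /=; first by move=> Lx; exists x.
case=> a /IH Ha; exists a.
by rewrite (_ : x - a *: v = (- a) *: v + x) ?linT ?scaleNr 1?addrC in Ha.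
Qed.

(* The coordinate of
   the head of s is either useless on M, or can be carried by a vector of M. *)
Lemma span_mod_refine L s M : lin_subspace L -> lin_subspace M ->
  (forall x, M x -> span_mod L s x) ->
  exists t : seq X, (forall i, M (nth 0 t i)) /\ forall x, M x -> span_mod L t x.
Proof.
move=> HL; elim: s M => [|u s IH] M HM Hs.
  by exists [::]; split => [i|//]; rewrite nth_nil; exact: lin_sub0.
pose M' x := M x /\ span_mod L s x.
have HM' : lin_subspace M'.
  have HLs := span_mod_subspace s HL.
  split; first by split; exact: lin_sub0.
  by move=> a x y [Mx Sx] [My Sy]; split; exact: lin_subC.
have [t [tM' covM']] := IH M' HM' (fun x (H : M' x) => proj2 H).
have tM i : M (nth 0 t i) by case: (tM' i).
case: (pselect (forall x, M x -> span_mod L s x)) => [covM|].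
  by exists t; split => // x Mx; apply: covM'; split => //; exact: covM.
move=> /existsNP[m0 /not_implyP[Mm0 Nm0]].
have [a0 Ha0] := Hs _ Mm0.
have a0N : a0 != 0.
  by apply: contra_notN Nm0 => /eqP a00; rewrite a00 scale0r subr0 in Ha0.
exists (m0 :: t); split; first by case.
move=> x Mx; have [a Ha] := Hs _ Mx; exists (a / a0); apply: covM'; split.
  by apply: lin_subB => //; exact: lin_subZ.
have -> : x - (a / a0) *: m0 = (- (a / a0)) *: (m0 - a0 *: u) + (x - a *: u).
  rewrite !scaleNr scalerBr scalerA divfK // opprB.
  by rewrite [RHS]addrC addrA subrK.
exact: lin_subC (span_mod_subspace s HL) Ha0 Ha.
Qed.

Lemma span_mod_sum L n (v : 'I_n -> X) x :
  (exists c : 'I_n -> R[i], L (x - \sum_(i < n) c i *: v i)) ->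
  span_mod L (map v (enum 'I_n)) x.
Proof.
elim: n v x => [|n IH] v x [c Hc].
  by rewrite enum_ord0 /=; move: Hc; rewrite big_ord0 subr0.
rewrite enum_ordSl /= -map_comp; exists (c ord0).
apply: (IH (v \o lift ord0)); exists (c \o lift ord0).
by move: Hc; rewrite big_ord_recl opprD addrA.
Qed.

Lemma sum_span_mod L s x : span_mod L s x ->
  exists c : 'I_(size s) -> R[i], L (x - \sum_(i < size s) c i *: nth 0 s i).
Proof.
elim: s x => [|v s IH] x /=.
  by move=> Lx; exists (fun _ => 0); rewrite big_ord0 subr0.
case=> a /IH[c Hc].
exists (fun i : 'I_(size s).+1 => if unlift ord0 i is Some j then c j else a).
rewrite big_ord_recl /= unlift_none.
under eq_bigr => i _ do rewrite liftK.
by rewrite opprD addrA.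
Qed.

Lemma quot_fin_dim_span M L : quot_fin_dim M L ->
  exists s, forall x, M x -> span_mod L s x.
Proof.
case=> n [v [_ H]]; exists (map v (enum 'I_n)) => x Mx.
exact: span_mod_sum (H x Mx).
Qed.

Lemma span_quot_fin_dim M L s : lin_subspace L -> lin_subspace M ->
  (forall x, M x -> span_mod L s x) -> quot_fin_dim M L.
Proof.
move=> HL HM Hs; have [t [tM covM]] := span_mod_refine HL HM Hs.
exists (size t), (fun i => nth 0 t i); split => // x Mx.
exact: sum_span_mod (covM x Mx).
Qed.

End SpanModulo.

Section ClosedSpans.
Variables (R : realType) (X : normedModType R[i]).
Implicit Types (M N S : set X) (F : set (set X)).

Lemma cspan_sub S : S `<=` cspan S.
Proof. by move=> x Sx M [_ SM]; exact: SM. Qed.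

Lemma cspan_min S M : closed_subspace M -> S `<=` M -> cspan S `<=` M.
Proof. by move=> HM SM x; apply. Qed.

Lemma closed_subspace_bigcap (I : Type) (D : set I) (f : I -> set X) :
  (forall i, D i -> closed_subspace (f i)) ->
  closed_subspace (\bigcap_(i in D) f i).
Proof.
move=> Hf; split; last by apply: closed_bigI => i /Hf[].
split; first by move=> i /Hf[[? _] _].
move=> a x y fx fy i Di; have [Hi _] := Hf i Di.
by apply: lin_subC Hi (fx i Di) (fy i Di).
Qed.

Lemma cspan_closed S : closed_subspace (cspan S).
Proof. by apply: closed_subspace_bigcap => M []. Qed.

Lemma cspan_mono S S' : S `<=` S' -> cspan S `<=` cspan S'.
Proof.
move=> SS'; apply: cspan_min; first exact: cspan_closed.
by move=> x /SS'; exact: cspan_sub.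
Qed.

Lemma smeet_sub F M : F M -> smeet F `<=` M.
Proof. by move=> FM x; apply. Qed.

Lemma sub_smeet F M : (forall N, F N -> M `<=` N) -> M `<=` smeet F.
Proof. by move=> H x Mx N FN; exact: H. Qed.

Lemma sjoin_sup F M : F M -> M `<=` sjoin F.
Proof. by move=> FM x Mx; apply: cspan_sub; exists M. Qed.

Lemma sjoin_min F M : closed_subspace M -> (forall N, F N -> N `<=` M) ->
  sjoin F `<=` M.
Proof. by move=> HM H; apply: cspan_min => // x [N FN Nx]; exact: (H N). Qed.

Lemma bounded_op0 (T : X -> X) : bounded_op T -> T 0 = 0.
Proof.
case=> linT _; have := linT 1 0 0; rewrite scaler0 addr0 scale1r => h.
by apply: (addrI (T 0)); rewrite addr0 -h.
Qed.

Lemma preimage_closed_subspace (A : X -> X) W : bounded_op A ->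
  closed_subspace W -> closed_subspace (A @^-1` W).
Proof.
move=> bA [[W0 linW] cW]; split; last first.
  by case: bA => _ cA; exact: (continuous_closedP A).1 cA _ cW.
split; first by rewrite /preimage /= bounded_op0.
by move=> a x y Wx Wy; case: bA => linA _; rewrite /preimage /= linA; exact: linW.
Qed.

Lemma image_subspace (T : X -> X) N : bounded_op T -> lin_subspace N ->
  lin_subspace (T @` N).
Proof.
move=> bT [N0 linN]; split; first by exists 0 => //; exact: bounded_op0.
move=> a _ _ [x Nx <-] [y Ny <-]; exists (a *: x + y); first exact: linN.
by case: bT => linT _; rewrite linT.
Qed.

Section Nest.
Variable E : set (set X).
Hypothesis nE : is_nest E.

Lemma nest_closed M : E M -> closed_subspace M.
Proof. by case: nE => H *; exact: H. Qed.

Lemma nest_subspace M : E M -> lin_subspace M.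
Proof. by move=> /nest_closed[]. Qed.

Lemma nest_total M N : E M -> E N -> M `<=` N \/ N `<=` M.
Proof. by case: nE => _ H *; exact: H. Qed.

Lemma nest_smeet F : F `<=` E -> E (smeet F).
Proof. by case: nE => _ _ _ _ H FE; case: (H F FE). Qed.

Lemma nest_sjoin F : F `<=` E -> E (sjoin F).
Proof. by case: nE => _ _ _ _ H FE; case: (H F FE). Qed.

Lemma nest_0 : E [set 0].
Proof. by case: nE. Qed.

Lemma nest_minus_in N : E (nest_minus E N).
Proof. by apply: nest_sjoin => M []. Qed.

Lemma nest_plus_in N : E (nest_plus E N).
Proof. by apply: nest_smeet => M []. Qed.

End Nest.

Lemma sub_nest_plus (E : set (set X)) K : K `<=` nest_plus E K.
Proof. by apply: sub_smeet => N [_ []]. Qed.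

End ClosedSpans.
Section RealStructure.
Local Open Scope complex_scope.
Variables (R : realType) (X : normedModType R[i]).

Definition rscale (t : R) (x : X) : X := t%:C *: x.
Definition rnorm (x : X) : R := complex.Re `|x|.

Lemma realC_Re (z : R[i]) : complex.Im z = 0 -> z = (complex.Re z)%:C.
Proof. by case: z => a b /= ->. Qed.

Lemma normE (x : X) : `|x| = (rnorm x)%:C.
Proof. by apply: realC_Re; apply: ger0_Im. Qed.

Lemma rnorm_ge0 (x : X) : 0 <= rnorm x.
Proof. by have := normr_ge0 x; rewrite normE lecR. Qed.

Lemma rnormD (x y : X) : rnorm (x + y) <= rnorm x + rnorm y.
Proof. by have := ler_normD x y; rewrite !normE -rmorphD lecR. Qed.

Lemma normC_real (t : R) : `|t%:C| = `|t|%:C.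
Proof. by rewrite normc_def /= expr0n /= addr0 sqrtr_sqr. Qed.

Lemma rnormZ (t : R) (x : X) : rnorm (rscale t x) = `|t| * rnorm x.
Proof. by rewrite /rnorm /rscale normrZ normC_real normE -rmorphM. Qed.

Lemma rnormN (x : X) : rnorm (- x) = rnorm x.
Proof. by rewrite /rnorm normrN. Qed.

Lemma rnorm_iZ (x : X) : rnorm ('i *: x) = rnorm x.
Proof.
by rewrite /rnorm normrZ normc_def /= expr0n /= add0r expr1n sqrtr1 mul1r.
Qed.

Lemma rscaleDl a b x : rscale (a + b) x = rscale a x + rscale b x.
Proof. by rewrite /rscale rmorphD scalerDl. Qed.
Lemma rscaleDr a x y : rscale a (x + y) = rscale a x + rscale a y.
Proof. by rewrite /rscale scalerDr. Qed.
Lemma rscaleA a b x : rscale a (rscale b x) = rscale (a * b) x.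
Proof. by rewrite /rscale scalerA rmorphM. Qed.
Lemma rscale1 x : rscale 1 x = x.
Proof. by rewrite /rscale rmorph1 scale1r. Qed.
Lemma rscale0 x : rscale 0 x = 0.
Proof. by rewrite /rscale rmorph0 scale0r. Qed.
Lemma rscaler0 a : rscale a 0 = 0.
Proof. by rewrite /rscale scaler0. Qed.
Lemma rscaleN a x : rscale (- a) x = - rscale a x.
Proof. by rewrite /rscale rmorphN scaleNr. Qed.
Lemma rscalerN a x : rscale a (- x) = - rscale a x.
Proof. by rewrite /rscale scalerN. Qed.

End RealStructure.

Section HahnBanach.
Variables (R : realType) (X : normedModType R[i]).
Variable p : X -> R.
Hypothesis p_subadd : forall x y, p (x + y) <= p x + p y.
Hypothesis p_homog : forall t x, 0 <= t -> p (rscale t x) = t * p x.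

(* The graph G of a real-linear functional defined on a real subspace of X
   and dominated by the sublinear functional p. *)
Definition dominated_graph (G : set (X * R)) : Prop :=
  [/\ (forall x a b, G (x, a) -> G (x, b) -> a = b),
      (forall x y a b t, G (x, a) -> G (y, b) ->
         G (rscale t x + y, t * a + b)),
      (forall x a, G (x, a) -> a <= p x) & G (0, 0)].

Section OneStepExtension.
Variable G : set (X * R).
Hypothesis domG : dominated_graph G.
Variable z : X.
Hypothesis z_notin : ~ exists a, G (z, a).

Let G_fun : forall x a b, G (x, a) -> G (x, b) -> a = b.
Proof. by case: domG. Qed.
Let G_lin : forall x y a b t, G (x, a) -> G (y, b) ->
  G (rscale t x + y, t * a + b).
Proof. by case: domG. Qed.
Let G_dom : forall x a, G (x, a) -> a <= p x.
Proof. by case: domG. Qed.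
Let G_00 : G (0, 0).
Proof. by case: domG. Qed.

Let G_scale x a t : G (x, a) -> G (rscale t x, t * a).
Proof. by move=> Ga; have := G_lin t Ga G_00; rewrite !addr0. Qed.

Let G_add x y a b : G (x, a) -> G (y, b) -> G (x + y, a + b).
Proof. by move=> Ga Gb; have := G_lin 1 Ga Gb; rewrite rscale1 mul1r. Qed.

(* The admissible values c for the extension at z lie between the lower
   bounds u - p (y - z) and the upper bounds p (y' + z) - u'; we take the
   supremum of the lower bounds. *)
Let lower_bounds := [set r | exists y u, G (y, u) /\ r = u - p (y - z)].

Let lower_le_upper y u y' u' : G (y, u) -> G (y', u') ->
  u - p (y - z) <= p (y' + z) - u'.
Proof.
move=> Gu Gu'; have h1 := G_dom (G_add Gu Gu').
have := p_subadd (y - z) (y' + z); rewrite addrA (addrAC y (- z)) subrK.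
lra.
Qed.

Let c := sup lower_bounds.

Let c_ge y u : G (y, u) -> u - p (y - z) <= c.
Proof.
move=> Gu; apply: sup_upper_bound; last by exists y, u.
split; first by exists (0 - p (0 - z)), 0, 0.
exists (p (0 + z) - 0) => r [y' [u' [Gu' ->]]]; exact: lower_le_upper Gu' G_00.
Qed.

Let c_le y u : G (y, u) -> c <= p (y + z) - u.
Proof.
move=> Gu; apply: ge_sup; first by exists (0 - p (0 - z)), 0, 0.
by move=> r [y' [u' [Gu' ->]]]; exact: lower_le_upper Gu' Gu.
Qed.

Definition graph_ext : set (X * R) :=
  [set q | exists y u (t : R), G (y, u) /\ q = (y + rscale t z, u + t * c)].

(* Values are well defined: two representations with different t would put
   z in the domain of G. *)
Lemma graph_ext_functional x a b :
  graph_ext (x, a) -> graph_ext (x, b) -> a = b.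
Proof.
move=> [y [u [t [Gu [-> ->]]]]] [y' [u' [t' [Gu' [e ->]]]]].
have [tt'|tt'] := eqVneq t t'.
  by subst t'; move/addIr: e => yy'; subst y'; rewrite (G_fun Gu Gu').
exfalso; apply: z_notin; exists ((t' - t)^-1 * (u - u')).
have Gd := G_lin (-1) Gu' Gu; rewrite rscaleN rscale1 mulN1r in Gd.
have := G_scale ((t' - t)^-1) Gd.
have ey : y = y' + rscale t' z - rscale t z by rewrite -e addrK.
have -> : rscale (t' - t)^-1 (- y' + y) = z.
  rewrite ey addrA addKr -rscaleN -rscaleDl rscaleA mulVf ?rscale1 //.
  by rewrite subr_eq0 eq_sym.
by rewrite (addrC (- u')).
Qed.

Lemma graph_ext_linear x y a b r : graph_ext (x, a) -> graph_ext (y, b) ->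
  graph_ext (rscale r x + y, r * a + b).
Proof.
move=> [y1 [u1 [t1 [G1 [-> ->]]]]] [y2 [u2 [t2 [G2 [-> ->]]]]].
exists (rscale r y1 + y2), (r * u1 + u2), (r * t1 + t2); split; first exact: G_lin.
congr (_, _); last by rewrite mulrDr mulrA mulrDl; lra.
rewrite rscaleDr rscaleA rscaleDl -!addrA; congr (_ + _).
by rewrite addrCA.
Qed.

(* The choice of c keeps the extension dominated by p: rescale by |t|. *)
Lemma graph_ext_dominated x a : graph_ext (x, a) -> a <= p x.
Proof.
move=> [y [u [t [Gu [-> ->]]]]].
have [t_lt0|t_gt0|->] := ltgtP t 0; last first.
  by rewrite rscale0 addr0 mul0r addr0; exact: G_dom.
- have e : y + rscale t z = rscale t (rscale t^-1 y + z).
    by rewrite rscaleDr rscaleA mulfV ?gt_eqF // rscale1.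
  have h := ler_wpM2l (ltW t_gt0) (c_le (G_scale t^-1 Gu)).
  rewrite mulrBr mulrA mulfV ?gt_eqF // mul1r in h.
  by rewrite e p_homog ?(ltW t_gt0) //; lra.
- have nt_gt0 : 0 < - t by rewrite oppr_gt0.
  have e : y + rscale t z = rscale (- t) (rscale (- t)^-1 y - z).
    by rewrite rscaleDr rscaleA mulfV ?gt_eqF // rscale1 rscalerN rscaleN opprK.
  have h := ler_wpM2l (ltW nt_gt0) (c_ge (G_scale (- t)^-1 Gu)).
  rewrite mulrBr mulrA mulfV ?gt_eqF // mul1r in h.
  by rewrite e p_homog ?(ltW nt_gt0) //; lra.
Qed.

Lemma graph_ext_dominated_graph : dominated_graph graph_ext.
Proof.
split; [exact: graph_ext_functional | exact: graph_ext_linear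
       | exact: graph_ext_dominated | ].
by exists 0, 0, 0; rewrite rscale0 addr0 mul0r addr0.
Qed.

Lemma graph_ext_sup : G `<=` graph_ext.
Proof. by move=> [x a] Ga; exists x, a, 0; rewrite rscale0 mul0r !addr0. Qed.

Lemma graph_ext_at : exists a, graph_ext (z, a).
Proof. by exists c, 0, 0, 1; rewrite rscale1 mul1r !add0r. Qed.

End OneStepExtension.

(* Dominated graphs containing G0 are closed under unions of chains: any two
   points of the union already lie in one dominated member. *)
Lemma dominated_chain_union (G0 : set (X * R)) (F : set (set (X * R))) :
  dominated_graph G0 -> (forall A, F A -> dominated_graph (A `|` G0)) ->
  total_on F subset -> dominated_graph ((\bigcup_(A in F) A) `|` G0).
Proof.
move=> domG0 domF totF; pose U := (\bigcup_(A in F) A) `|` G0.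
have sub A : F A -> A `|` G0 `<=` U.
  by move=> FA q [Aq|G0q]; [left; exists A | right].
have common q1 q2 : U q1 -> U q2 ->
    exists2 V, dominated_graph V & [/\ V `<=` U, V q1 & V q2].
  case=> [[A1 FA1 A1q]|G0q1]; case=> [[A2 FA2 A2q]|G0q2].
  - have [A12|A21] := totF _ _ FA1 FA2.
    + by exists (A2 `|` G0); [exact: domF | split; [exact: sub | left; exact: A12 | left]].
    + by exists (A1 `|` G0); [exact: domF | split; [exact: sub | left | left; exact: A21]].
  - by exists (A1 `|` G0); [exact: domF | split; [exact: sub | left | right]].
  - by exists (A2 `|` G0); [exact: domF | split; [exact: sub | right | left]].
  - by exists G0 => //; split => // q G0q; right.
split; last by right; case: domG0.
- move=> x a b Ua Ub; have [V [V_fun _ _ _] [_ Va Vb]] := common _ _ Ua Ub.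
  exact: V_fun Va Vb.
- move=> x y a b t Ua Ub; have [V [_ V_lin _ _] [VU Va Vb]] := common _ _ Ua Ub.
  exact/VU/V_lin.
- move=> x a Ua; have [V [_ _ V_dom _] [_ Va _]] := common _ _ Ua Ua.
  exact: V_dom Va.
Qed.

(* Hahn-Banach theorem, real form: a real-linear functional on a real
   subspace dominated by p extends to a real-linear functional on X dominated
   by p.  A maximal dominated extension (Zorn) is total by [graph_ext]. *)
Lemma hahn_banach_real (G0 : set (X * R)) : dominated_graph G0 ->
  exists u : X -> R,
  [/\ forall x y t, u (rscale t x + y) = t * u x + u y,
      forall x, u x <= p x & forall x a, G0 (x, a) -> u x = a].
Proof.
move=> domG0; pose P A := dominated_graph (A `|` G0).
have [A [PA Amax]] : exists A, P A /\ forall B, A `<` B -> ~ P B.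
  by apply: Zorn_bigcup => F FP totF; exact: dominated_chain_union.
pose G := A `|` G0.
have total x : exists a, G (x, a).
  apply: contrapT => nx; apply: (Amax (graph_ext G x)).
    split; first by move=> q Aq; apply: graph_ext_sup; left.
    move=> sub; have [a Ha] := graph_ext_at PA x.
    by apply: nx; exists a; left; exact: sub.
  rewrite /P (_ : graph_ext G x `|` G0 = graph_ext G x).
    exact: (@graph_ext_dominated_graph G PA x nx).
  by apply/seteqP; split => [q [//|G0q]|q Hq]; [apply: graph_ext_sup; right | left].
have [u Hu] := choice total.
case: PA => G_fun G_lin G_dom _.
exists u; split.
- by move=> x y t; apply: G_fun (Hu _) (G_lin _ _ _ _ _ (Hu x) (Hu y)).
- by move=> x; exact: G_dom (Hu x).
- by move=> x a Ha; apply: G_fun (Hu x) _; right.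
Qed.

End HahnBanach.
Section Separation.
Local Open Scope complex_scope.
Variables (R : realType) (X : normedModType R[i]).

Lemma closed_dist_pos (K : set X) x0 : closed K -> ~ K x0 ->
  exists2 d : R, 0 < d & forall k, K k -> d <= rnorm (x0 - k).
Proof.
move=> cK nKx0.
have := closed_openC cK; rewrite openE => /(_ x0 nKx0).
rewrite /interior => /nbhs_ballP[e e_gt0' sub].
have e_gt0 : (0 : R[i]) < e := e_gt0'.
have Ie : complex.Im e = 0 by apply: ger0_Im; exact: ltW.
exists (complex.Re e); first by move: e_gt0; rewrite ltcE /= Ie eqxx.
move=> k Kk; rewrite leNgt; apply/negP => lt.
by apply: (sub k) => //; rewrite -ball_normE /ball_ /= normE (realC_Re Ie) ltcR.
Qed.

Lemma line_graph_dominated (K : set X) x0 (d : R) : lin_subspace K ->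
  ~ K x0 -> 0 < d -> (forall k, K k -> d <= rnorm (x0 - k)) ->
  dominated_graph (fun z => rnorm z / d)
    [set q | exists k t, K k /\ q = (k + rscale t x0, t)].
Proof.
move=> lK nKx0 d_gt0 dist.
have KZ t k : K k -> K (rscale t k) by move=> Kk; exact: lin_subZ.
split.
- move=> x a b [k [t [Kk [-> ->]]]] [k' [t' [Kk' [e ->]]]].
  apply: contrapT => tt'; apply: nKx0.
  have e1 : rscale (t - t') x0 = k' - k.
    by apply: (addrI k); rewrite rscaleDl rscaleN addrA e addrK addrC subrK.
  have -> : x0 = rscale (t - t')^-1 (k' - k).
    by rewrite -e1 rscaleA mulVf ?rscale1 // subr_eq0; apply/eqP.
  by apply: KZ; exact: lin_subB.
- move=> x y a b r [k [t [Kk [-> ->]]]] [k' [t' [Kk' [-> ->]]]].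
  exists (rscale r k + k'), (r * t + t'); split.
    by apply: lin_subD => //; exact: KZ.
  congr (_, _); rewrite rscaleDr rscaleA rscaleDl -!addrA; congr (_ + _).
  by rewrite addrCA.
- move=> x a [k [t [Kk [-> ->]]]].
  have [t_le0|t_gt0] := leP t 0.
    by apply: le_trans t_le0 _; rewrite divr_ge0 ?rnorm_ge0 // ltW.
  have -> : k + rscale t x0 = rscale t (x0 - rscale t^-1 (- k)).
    by rewrite rscaleDr rscalerN rscaleA mulfV ?gt_eqF // rscale1 opprK addrC.
  rewrite rnormZ gtr0_norm // ler_pdivlMr // ler_pM2l //.
  by apply: dist; apply: KZ; exact: lin_subN.
- by exists 0, 0; split; [exact: lin_sub0 | rewrite rscale0 addr0].
Qed.

Lemma real_linear_opp (u : X -> R) :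
  (forall x y t, u (rscale t x + y) = t * u x + u y) -> forall x, u (- x) = - u x.
Proof.
move=> u_lin x.
have u0 : u 0 = 0 by have := u_lin 0 0 1; rewrite rscaler0 addr0 mul1r; lra.
by have := u_lin x 0 (-1); rewrite rscaleN rscale1 addr0 mulN1r u0 addr0.
Qed.

Lemma real_separation (K : set X) x0 : closed_subspace K -> ~ K x0 ->
  exists u : X -> R, exists2 k : R, 0 <= k &
  [/\ forall x y t, u (rscale t x + y) = t * u x + u y,
      forall x, `|u x| <= k * rnorm x,
      forall y, K y -> u y = 0 & u x0 = 1].
Proof.
move=> [lK cK] nKx0; have [d d_gt0 dist] := closed_dist_pos cK nKx0.
pose p (z : X) := rnorm z / d.
have p_subadd x y : p (x + y) <= p x + p y.
  by rewrite /p -mulrDl ler_pM2r ?invr_gt0 // rnormD.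
have p_homog t x : 0 <= t -> p (rscale t x) = t * p x.
  by move=> t_ge0; rewrite /p rnormZ ger0_norm // mulrA.
have [u [u_lin u_dom u_ext]] := hahn_banach_real p_subadd p_homog
  (line_graph_dominated lK nKx0 d_gt0 dist).
have u_opp := real_linear_opp u_lin.
exists u, d^-1; first by rewrite invr_ge0 ltW.
split => //.
- move=> x; rewrite mulrC -/(p x) ler_norml u_dom andbT lerNl -u_opp.
  by apply: le_trans (u_dom _) _; rewrite /p rnormN.
- by move=> y Ky; apply: u_ext; exists y, 0; rewrite rscale0 addr0.
- by apply: u_ext; exists 0, 1; split; [exact: lin_sub0 | rewrite rscale1 add0r].
Qed.

Lemma sqrt_sum_sq_le (a b : R) : Num.sqrt (a ^+ 2 + b ^+ 2) <= `|a| + `|b|.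
Proof.
rewrite -[leRHS]ger0_norm ?addr_ge0 // -sqrtr_sqr ler_wsqrtr //.
have ha := normr_ge0 a; have hb := normr_ge0 b.
rewrite sqrrD -(real_normK (num_real a)) -(real_normK (num_real b)); nra.
Qed.

Definition complexify (u : X -> R) (z : X) : R[i] := u z +i* (- u ('i *: z)).

Section Complexify.
Variable u : X -> R.
Hypothesis u_lin : forall x y t, u (rscale t x + y) = t * u x + u y.

Lemma complexify_linear a x y :
  complexify u (a *: x + y) = a * complexify u x + complexify u y.
Proof.
have u_opp := real_linear_opp u_lin.
have u_cplx ar ai x' y' :
    u ((ar +i* ai) *: x' + y') = ar * u x' + ai * u ('i *: x') + u y'.
  have -> : (ar +i* ai) *: x' + y' = rscale ar x' + (rscale ai ('i *: x') + y').
    by rewrite addrA /rscale scalerA -scalerDl; congr (_ *: _ + _); simpc.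
  by rewrite u_lin u_lin addrA.
have ii : 'i *: ('i *: x) = - x by rewrite scalerA (_ : 'i * 'i = -1) ?scaleN1r; simpc.
case: a => ar ai; rewrite /complexify u_cplx.
have -> : 'i *: ((ar +i* ai) *: x + y) = (ar +i* ai) *: ('i *: x) + 'i *: y.
  by rewrite scalerDr !scalerA mulrC.
rewrite u_cplx ii u_opp; simpc; congr (_ +i* _); ring.
Qed.

Lemma complexify_bound (k : R) : (forall x, `|u x| <= k * rnorm x) ->
  forall z, complex.Re `|complexify u z| <= (2 * k) * rnorm z.
Proof.
move=> u_bd z; rewrite /complexify normc_def /=.
apply: le_trans (sqrt_sum_sq_le _ _) _.
have := u_bd z; have := u_bd ('i *: z); rewrite rnorm_iZ normrN; lra.
Qed.

End Complexify.

Lemma separating_functional (K : set X) x0 : closed_subspace K -> ~ K x0 ->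
  exists g : X -> R[i], exists2 k : R, 0 <= k &
    [/\ (forall a x y, g (a *: x + y) = a * g x + g y),
        (forall y, K y -> g y = 0), g x0 != 0 &
        (forall z, complex.Re `|g z| <= k * rnorm z)].
Proof.
move=> cK nKx0; have [lK _] := cK.
have [u [k k_ge0 [u_lin u_bd u_K u_x0]]] := real_separation cK nKx0.
exists (complexify u), (2 * k); first by rewrite mulr_ge0.
split; [exact: complexify_linear | | | exact: complexify_bound].
  by move=> y Ky; rewrite /complexify !u_K ?oppr0 //; exact: lin_subZ.
by rewrite /complexify u_x0; apply/negP => /eqP [] /eqP; rewrite oner_eq0.
Qed.

End Separation.
Section Reflexivity.
Local Open Scope complex_scope.
Variables (R : realType) (X : normedModType R[i]).

Lemma bounded_additive_continuous (f : X -> X) (k : R) :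
  (forall x y, f (x - y) = f x - f y) -> 0 <= k ->
  (forall z, rnorm (f z) <= k * rnorm z) -> continuous f.
Proof.
move=> fB k_ge0 f_bd x; apply/cvgrPdist_lt => e e_gt0'.
have e_gt0 : (0 : R[i]) < e := e_gt0'.
have Ie : complex.Im e = 0 by apply: ger0_Im; exact: ltW.
have er_gt0 : 0 < complex.Re e by move: e_gt0; rewrite ltcE /= Ie eqxx.
pose dl := complex.Re e / (k + 1).
have dl_gt0 : (0 : R[i]) < dl%:C by rewrite ltcR divr_gt0 // ltr_wpDl.
have [near_x _] := @cvgrPdist_lt _ _ _ (nbhs x) _ id x.
apply: filterS (near_x cvg_id _ dl_gt0) => z /=.
rewrite -fB !normE (realC_Re Ie) !ltcR /dl ltr_pdivlMr ?ltr_wpDl // => hz.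
have := f_bd (x - z); have := rnorm_ge0 (x - z); lra.
Qed.

Lemma rank_one_bounded (g : X -> R[i]) (k : R) (y : X) : 0 <= k ->
  (forall a x y, g (a *: x + y) = a * g x + g y) ->
  (forall z, complex.Re `|g z| <= k * rnorm z) ->
  bounded_op (fun z => g z *: y).
Proof.
move=> k_ge0 g_lin g_bd; split.
  by move=> a x x'; rewrite g_lin scalerDl scalerA.
have g0 : g 0 = 0.
  have := g_lin 1 0 0; rewrite scaler0 addr0 mul1r => h.
  by apply: (addrI (g 0)); rewrite addr0 -h.
have gB x x' : g (x - x') = g x - g x'.
  by have := g_lin (-1) x' x; rewrite scaleN1r mulN1r addrC [- _ + _]addrC.
apply: (@bounded_additive_continuous _ (k * rnorm y)).
- by move=> x x'; rewrite gB scalerBl.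
- by rewrite mulr_ge0 // rnorm_ge0.
- move=> z; rewrite {1}/rnorm normrZ (realC_Re (ger0_Im (normr_ge0 (g z)))).
  rewrite (normE y) -rmorphM /= mulrAC.
  by apply: ler_wpM2r; [exact: rnorm_ge0 | exact: g_bd].
Qed.

Variable E : set (set X).
Hypothesis nE : is_nest E.

Definition alg_invariant (M : set X) : Prop :=
  forall A, nest_alg E A -> A @` M `<=` M.

(* If an invariant subspace M contains a vector x outside K in E, it contains
   K_+: for y in K_+, the rank-one operator z |-> g z *: y, with g vanishing
   on K and g x <> 0, lies in T(E) and maps x into M. *)
Lemma invariant_nest_plus (M K : set X) x : lin_subspace M ->
  alg_invariant M -> E K -> ~ K x -> M x -> nest_plus E K `<=` M.
Proof.
move=> lM inv EK nKx Mx y Ky.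
have [g [k k_ge0 [g_lin g_K g_x g_bd]]] := separating_functional (nest_closed nE EK) nKx.
pose A z := g z *: y.
have alg_A : nest_alg E A.
  split; first exact: rank_one_bounded k_ge0 g_lin g_bd.
  move=> N EN _ [w Nw <-]; have lN := nest_subspace nE EN; rewrite /A.
  have vanish : K w -> N (g w *: y).
    by move=> Kw; rewrite g_K // scale0r; exact: lin_sub0.
  have [NK|KN] := nest_total nE EN EK; first exact/vanish/NK.
  have [KeN|KneN] := pselect (K = N); first by apply: vanish; rewrite KeN.
  by apply: lin_subZ lN _; apply: Ky; split.
have : M (A x) by apply: (inv A alg_A); exists x.
by rewrite /A => /(lin_subZ (g x)^-1 lM); rewrite scalerA mulVf ?scale1r.
Qed.

(* M equals the join F of the nest elements inside M: for x in M, let L0 be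
   the join of the nest elements avoiding x; either x lies in L0, which is
   then covered by the L_+ (L avoiding x), or x lies in L0_+; both are in F. *)
Lemma nest_reflexive (M : set X) : closed_subspace M -> alg_invariant M -> E M.
Proof.
move=> cM inv; have [lM _] := cM.
pose F := sjoin [set L | E L /\ L `<=` M].
have EF : E F by apply: (nest_sjoin nE) => L [].
suff -> : M = F by [].
apply/seteqP; split; last by apply: sjoin_min => // L [].
move=> x Mx; apply: contrapT => nFx.
have plus_F L : E L -> ~ L x -> nest_plus E L `<=` F.
  move=> EL nLx; apply: sjoin_sup; split; first exact: nest_plus_in.
  exact: invariant_nest_plus inv EL nLx Mx.
pose L0 := sjoin [set L | E L /\ ~ L x].
have EL0 : E L0 by apply: (nest_sjoin nE) => L [].
have [L0x|nL0x] := pselect (L0 x).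
  have L0F : L0 `<=` F.
    apply: sjoin_min (nest_closed nE EF) _ => L [EL nLx] w Lw.
    exact: plus_F EL nLx _ (sub_nest_plus (E := E) Lw).
  exact: nFx (L0F _ L0x).
apply: nFx; apply: (plus_F _ EL0 nL0x) => N [EN [L0N L0neN]].
apply: contrapT => nNx; apply: L0neN; apply/seteqP; split => //.
exact: sjoin_sup.
Qed.

End Reflexivity.
Section SupportFunctions.
Variables (R : realType) (X : normedModType R[i]).
Variable E : set (set X).
Variable J : set (X -> X).
Hypothesis nE : is_nest E.
Hypothesis bJ : bimodule E J.

Local Notation Phi := (Phi_J J).
Local Notation Psi := (Phie_J E J).

Lemma bimodule_bounded T : J T -> bounded_op T.
Proof. by case: bJ => H *; exact: H. Qed.

Lemma bimodule_left A T : nest_alg E A -> J T -> J (A \o T).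
Proof. by case: bJ => _ _ _ H nA JT; case: (H A T nA JT). Qed.

(* [J N] is T(E)-invariant since J is a left T(E)-module, hence lies in E. *)
Lemma Phi_in_nest N : E (Phi N).
Proof.
apply: (nest_reflexive nE); first exact: cspan_closed.
move=> A algA _ [v JNv <-].
have cQ := preimage_closed_subspace (proj1 algA)
  (cspan_closed [set y | exists T x, [/\ J T, N x & y = T x]]).
apply: (cspan_min cQ _ JNv) => y [T [x [JT Nx ->]]].
by apply: cspan_sub; exists (A \o T), x; split => //; exact: bimodule_left.
Qed.

Lemma Phi_mono N1 N2 : N1 `<=` N2 -> Phi N1 `<=` Phi N2.
Proof.
move=> N12; apply: cspan_mono => y [T [x [JT Nx ->]]].
by exists T, x; split => //; exact: N12.
Qed.

(* Admissibility of Phi: the generators T x, x in N_-, lie in the closed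
   subspace Q of vectors sent by every T in J into the join W of the
   Phi F, F strictly below N. *)
Lemma Phi_admissible N :
  sjoin (Phi @` [set F | E F /\ F `<=` N /\ F <> N]) = Phi (nest_minus E N).
Proof.
apply/seteqP; split.
  apply: sjoin_min; first exact: cspan_closed.
  by move=> _ [F HF <-]; apply: Phi_mono; exact: sjoin_sup.
pose W := sjoin (Phi @` [set F | E F /\ F `<=` N /\ F <> N]).
pose Q := \bigcap_(T in J) (T @^-1` W).
have cQ : closed_subspace Q.
  apply: closed_subspace_bigcap => T JT.
  exact: preimage_closed_subspace (bimodule_bounded JT) (cspan_closed _).
have minusQ : nest_minus E N `<=` Q.
  apply: sjoin_min => // F HF x Fx T JT.
  apply: (sjoin_sup (M := Phi F)); first by exists F.
  by apply: cspan_sub; exists T, x.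
apply: cspan_min (cspan_closed _) _ => y [T [x [JT Nx ->]]].
exact: minusQ Nx T JT.
Qed.

Lemma Phi_zero : Phi [set 0] = [set 0].
Proof.
apply/seteqP; split.
  apply: cspan_min; first by apply: (nest_closed nE); exact: nest_0 nE.
  by move=> y [T [x [JT -> ->]]]; rewrite /= bounded_op0 //; exact: bimodule_bounded.
by move=> x ->; exact: lin_sub0 (cspan_closed _).1.
Qed.

Definition ess_family (N : set X) : set (set X) :=
  [set L | E L /\ forall T, J T -> quot_fin_dim (T @` N) L].

Lemma ess_family_anti N1 N2 : lin_subspace N1 -> N1 `<=` N2 ->
  ess_family N2 `<=` ess_family N1.
Proof.
move=> lN1 N12 L [EL fdL]; split => // T JT.
have [s covN2] := quot_fin_dim_span (fdL T JT).
apply: (span_quot_fin_dim (s := s) (nest_subspace nE EL)).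
  exact: image_subspace (bimodule_bounded JT) lN1.
by move=> _ [x N1x <-]; apply: covN2; exists x => //; exact: N12.
Qed.

Lemma Psi_mono N1 N2 : lin_subspace N1 -> N1 `<=` N2 -> Psi N1 `<=` Psi N2.
Proof.
move=> lN1 N12; apply: sub_smeet => L HL; apply: smeet_sub.
exact: ess_family_anti lN1 N12 _ HL.
Qed.

(* A finite-dimensional enlargement of N does not change the family:
   T N2 is covered by T s1 + T N1, and T N1 by s2 + L. *)
Lemma ess_family_fin N1 N2 : lin_subspace N2 -> quot_fin_dim N2 N1 ->
  ess_family N1 `<=` ess_family N2.
Proof.
move=> lN2 fdN L [EL fdL]; split => // T JT.
have [s1 covN2] := quot_fin_dim_span fdN.
have [s2 covTN1] := quot_fin_dim_span (fdL T JT).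
apply: (span_quot_fin_dim (s := map T s1 ++ s2) (nest_subspace nE EL)).
  exact: image_subspace (bimodule_bounded JT) lN2.
move=> _ [x N2x <-]; apply: span_mod_cat covTN1 _.
by apply: span_mod_image; [case: (bimodule_bounded JT) | exact: covN2].
Qed.

Lemma ess_family_minus N L : lin_subspace N -> ess_family N L -> nest_f E L ->
  ess_family N (nest_minus E L).
Proof.
move=> lN [EL fdL] [_ _ fdLm]; split; first exact: nest_minus_in.
move=> T JT; have [s1 covTN] := quot_fin_dim_span (fdL T JT).
have [s2 covL] := quot_fin_dim_span fdLm.
apply: (span_quot_fin_dim (s := s1 ++ s2) (nest_subspace nE (nest_minus_in nE L))).
  exact: image_subspace (bimodule_bounded JT) lN.
by move=> y /covTN; exact: span_mod_cat covL.
Qed.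

Lemma Psi_in_nest N : E (Psi N).
Proof. by apply: (nest_smeet nE) => L []. Qed.

Lemma Phi_ess_family N : ess_family N (Phi N).
Proof.
split; first exact: Phi_in_nest.
move=> T JT; exists 0%N, (fun _ => 0); split; first by case.
move=> _ [y Ny <-]; exists (fun _ => 0); rewrite big_ord0 subr0.
by apply: cspan_sub; exists T, y.
Qed.

Lemma Psi_le_Phi N : Psi N `<=` Phi N.
Proof. exact: smeet_sub (Phi_ess_family N). Qed.

(* If Psi N is in E_f it is not attained: otherwise (Psi N)_-, strictly
   smaller, would also belong to the family. *)
Lemma Psi_not_attained N : lin_subspace N -> nest_f E (Psi N) ->
  ~ ess_family N (Psi N).
Proof.
move=> lN nf fam; have fam_minus := ess_family_minus lN fam nf.
case: nf => _ [x [Psix nPsimx]] _; apply: nPsimx.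
exact: (smeet_sub fam_minus) Psix.
Qed.

Lemma Psi_plus N : lin_subspace N -> nest_f E (Psi N) ->
  Psi N = nest_plus E (Psi N).
Proof.
move=> lN nf; apply/seteqP; split; first exact: sub_nest_plus.
apply: sub_smeet => L [EL fdL]; apply: smeet_sub; split => //.
split; first exact: smeet_sub.
by move=> PsiL; apply: (Psi_not_attained lN nf); rewrite PsiL.
Qed.

Lemma Psi_fin_invariant N1 N2 : lin_subspace N1 -> lin_subspace N2 ->
  N1 `<=` N2 -> quot_fin_dim N2 N1 -> Psi N2 = Psi N1.
Proof.
move=> lN1 lN2 N12 fdN; apply/seteqP; split; last exact: Psi_mono.
apply: sub_smeet => L HL; apply: smeet_sub.
exact: ess_family_fin lN2 fdN _ HL.
Qed.

Lemma Phi_admissible_sf : admissible_sf E Phi.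
Proof.
split; last by move=> N _ _; exact: Phi_admissible.
by split=> [N _|N1 N2 _ _]; [exact: Phi_in_nest | exact: Phi_mono].
Qed.

Lemma Psi_essential : essential_sf E Psi.
Proof.
split.
- split=> [N _|N1 N2 EN1 _]; first exact: Psi_in_nest.
  exact: Psi_mono (nest_subspace nE EN1).
- by move=> N EN; exact: Psi_plus (nest_subspace nE EN).
- move=> N1 N2 EN1 EN2.
  exact: Psi_fin_invariant (nest_subspace nE EN1) (nest_subspace nE EN2).
Qed.

End SupportFunctions.

Theorem mainTheorem14 (R : realType) (X : completeNormedModType R[i])
  (E : set (set X)) (J : set (X -> X)) :
  is_nest E -> bimodule E J ->
  admissible_sf_pair E (Phi_J J) (Phie_J E J).
Proof.
move=> nE bJ; split.
  split; [exact: Phi_admissible_sf nE bJ | exact: Phi_zero nE bJ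
         | exact: Psi_essential nE bJ | ].
  by move=> N _; exact: Psi_le_Phi nE bJ N.
move=> N EN nf; split; first exact: Psi_le_Phi nE bJ N.
move=> PsiPhi; apply: (Psi_not_attained nE bJ (nest_subspace nE EN) nf).
by rewrite PsiPhi; exact: Phi_ess_family nE bJ N.
Qed.
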